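(* Fix an integer $r\ge1$ and let $F(x,y)=x^{2r+1}+y^{2r+1}+\sum_{j=1}^r c(r,j)x^{2r+1-2j}y^j$, where $c(r,j)=\frac{2r+1}{j}\binom{2r-j}{j-1}$. Let $H(x,y)=\sum_{j=1}^r\lambda_jx^{2r+1-2j}y^j$ with $0\le\lambda_j<c(r,j)$ for each $j$, and put $G=F-H+FH$. Then $N(G)=N(F)+N(FH)$.
   Context: $N(q)$ denotes the number of distinct monomials with nonzero coefficient in the polynomial $q$. *)

From mathcomp Require Import all_boot all_order all_algebra.
From mathcomp Require Import mpoly.

Import Order.TTheory GRing.Theory Num.Theory.
Local Open Scope ring_scope.

(* Bivariate polynomials in x = 'X_0, y = 'X_1 over a real field R. *)

(* N(q): number of distinct monomials with nonzero coefficient in q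
   (msupp q is duplicate-free). *)
Definition Nmon {R : realFieldType} (q : {mpoly R[2]}) : nat := size (msupp q).

Definition cc (R : realFieldType) (r j : nat) : R :=
  (2 * r + 1)%:R / j%:R * ('C(2 * r - j, j - 1))%:R.

Definition xmon (R : realFieldType) (r j : nat) : {mpoly R[2]} :=
  'X_0 ^+ (2 * r + 1 - 2 * j) * 'X_1 ^+ j.

Definition Fpoly (R : realFieldType) (r : nat) : {mpoly R[2]} :=
  'X_0 ^+ (2 * r + 1) + 'X_1 ^+ (2 * r + 1)
  + \sum_(1 <= j < r.+1) cc R r j *: xmon R r j.

Definition Hpoly (R : realFieldType) (r : nat) (lam : nat -> R) : {mpoly R[2]} :=
  \sum_(1 <= j < r.+1) lam j *: xmon R r j.

From mathcomp Require Import all_boot all_order all_algebra.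
From mathcomp Require Import mpoly.
From mathcomp Require Import zify.
Import Order.TTheory GRing.Theory Num.Theory.
Local Open Scope ring_scope.

(* F - H has the shape of F with coefficients c(r,j) - lambda_j, which are still
   nonzero, so F and F - H both have exactly the r + 2 monomials x^(2r+1), y^(2r+1)
   and x^(2r+1-2j) y^j, 1 <= j <= r.  These have total degree between r + 1 and
   2r + 1, so every monomial of F H has degree at least 2r + 2, and
   G = (F - H) + F H is a sum of two polynomials with disjoint supports. *)

Section MsuppBounds.
Variables (n : nat) (R : nzRingType).

Lemma msupp_sumZX_le (I : eqType) (s : seq I) (P : pred I) (a : I -> R)
    (e : I -> 'X_{1..n}) :
  {subset msupp (\sum_(i <- s | P i) a i *: 'X_[e i] : {mpoly R[n]})
     <= [seq e i | i <- s & P i]}.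
Proof.
move=> m /msupp_sum_le /flattenP [_ /mapP [i i_sP ->]] /msuppZ_le.
by rewrite msuppX mem_seq1 => /eqP ->; apply: map_f.
Qed.

Lemma mdeg_msuppM_ge (p q : {mpoly R[n]}) (a b : nat) :
  {in msupp p, forall m, a <= mdeg m}%N -> {in msupp q, forall m, b <= mdeg m}%N ->
  {in msupp (p * q), forall m, a + b <= mdeg m}%N.
Proof.
move=> p_ge q_ge m /msuppM_le /allpairsP [[m1 m2] /= [m1_p m2_q ->]].
by rewrite mdegD leq_add ?p_ge ?q_ge.
Qed.

Lemma size_msuppD_mdeg_sep (p q : {mpoly R[n]}) (d : nat) :
  {in msupp p, forall m, mdeg m <= d}%N -> {in msupp q, forall m, d < mdeg m}%N ->
  size (msupp (p + q)) = (size (msupp p) + size (msupp q))%N.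
Proof.
move=> p_le q_gt; rewrite -size_cat; apply/perm_size/msuppD => m /=.
by apply/andP => -[/p_le m_le /q_gt]; rewrite ltnNge m_le.
Qed.

End MsuppBounds.

Definition mxy (a b : nat) : 'X_{1..2} := (U_(0%R : 'I_2) *+ a + U_(1%R : 'I_2) *+ b)%MM.

Lemma mxyE0 a b : mxy a b 0 = a.
Proof. by rewrite mnmDE !mulmnE !mnm1E /= mul1n mul0n addn0. Qed.

Lemma mxyE1 a b : mxy a b 1 = b.
Proof. by rewrite mnmDE !mulmnE !mnm1E /= mul0n mul1n. Qed.

Lemma mdeg_mxy a b : mdeg (mxy a b) = (a + b)%N.
Proof. by rewrite mdegD !mdegMn !mdeg1 !mul1n. Qed.

Lemma mxy_inj a b a' b' : mxy a b = mxy a' b' -> a = a' /\ b = b'.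
Proof.
by move=> e; split; [rewrite -(mxyE0 a b) e mxyE0 | rewrite -(mxyE1 a b) e mxyE1].
Qed.

Lemma mpolyX_mxy (R : nzRingType) a b :
  'X_[mxy a b] = 'X_0 ^+ a * 'X_1 ^+ b :> {mpoly R[2]}.
Proof. by rewrite mpolyXD !mpolyXn. Qed.

Section FSupport.
Variables (R : nzRingType) (r : nat).

Definition xmnm (j : nat) : 'X_{1..2} := mxy (2 * r + 1 - 2 * j) j.

Definition Fmons : seq 'X_{1..2} :=
  mxy (2 * r + 1) 0 :: mxy 0 (2 * r + 1) :: [seq xmnm j | j <- index_iota 1 r.+1].

Definition Fwith (a : nat -> R) : {mpoly R[2]} :=
  'X_[mxy (2 * r + 1) 0] + 'X_[mxy 0 (2 * r + 1)]
  + \sum_(1 <= j < r.+1) a j *: 'X_[xmnm j].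

Lemma xmnm_inj : injective xmnm.
Proof. by move=> j k /mxy_inj []. Qed.

Lemma uniq_Fmons : uniq Fmons.
Proof.
rewrite /= inE negb_or -andbA; apply/and4P; split.
- by apply/negP => /eqP /mxy_inj []; lia.
- apply/negP => /mapP [j]; rewrite mem_index_iota => j_r.
  by move/mxy_inj; lia.
- apply/negP => /mapP [j]; rewrite mem_index_iota => j_r.
  by move/mxy_inj; lia.
- by rewrite map_inj_uniq ?iota_uniq //; apply: xmnm_inj.
Qed.

Lemma mdeg_Fmons m : m \in Fmons -> (r < mdeg m <= 2 * r + 1)%N.
Proof.
rewrite !inE => /or3P [/eqP -> | /eqP -> | /mapP [j]]; rewrite ?mdeg_mxy; try lia.
by rewrite mem_index_iota => j_r ->; rewrite mdeg_mxy; lia.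
Qed.

Lemma msupp_Fwith (a : nat -> R) :
  (forall j, (1 <= j <= r)%N -> a j != 0) -> perm_eq (msupp (Fwith a)) Fmons.
Proof.
move=> a_neq0.
pose c (m : 'X_{1..2}) := if m 1 \in index_iota 1 r.+1 then a (m 1) else 1.
have -> : Fwith a = \sum_(m <- Fmons) c m *: 'X_[m].
  have y_big : (2 * r + 1 < r.+1)%N = false by lia.
  rewrite !big_cons big_map /c !mxyE1 !mem_index_iota /= y_big andbF.
  rewrite !scale1r addrA; congr (_ + _); apply: eq_big_seq => j j_r.
  by rewrite /xmnm mxyE1 j_r.
apply: msupp_sumX; first exact: uniq_Fmons.
move=> m _; rewrite /c mem_index_iota.
by case: ifP => [/a_neq0 | _]; rewrite ?oner_neq0.
Qed.

End FSupport.

Arguments Fwith {R} r a.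

Lemma xmonE (R : realFieldType) r j : xmon R r j = 'X_[xmnm r j].
Proof. by rewrite mpolyX_mxy. Qed.

Lemma Fpoly_Fwith (R : realFieldType) r : Fpoly R r = Fwith r (cc R r).
Proof.
rewrite /Fpoly /Fwith !mpolyX_mxy expr0 mulr1 mul1r.
by congr (_ + _); apply: eq_bigr => j _; rewrite xmonE.
Qed.

Lemma Hpoly_sumX (R : realFieldType) r lam :
  Hpoly R r lam = \sum_(1 <= j < r.+1) lam j *: 'X_[xmnm r j].
Proof. by apply: eq_bigr => j _; rewrite xmonE. Qed.

Lemma FpolyB_Hpoly (R : realFieldType) r lam :
  Fpoly R r - Hpoly R r lam = Fwith r (fun j => cc R r j - lam j).
Proof.
rewrite Fpoly_Fwith Hpoly_sumX /Fwith -addrA -sumrB.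
by congr (_ + _); apply: eq_bigr => j _; rewrite scalerBl.
Qed.

Lemma msupp_Hpoly (R : realFieldType) r lam :
  {subset msupp (Hpoly R r lam) <= Fmons r}.
Proof.
move=> m; rewrite Hpoly_sumX => /msupp_sumZX_le.
by rewrite filter_predT !inE => ->; rewrite !orbT.
Qed.

Theorem proposition2p5 (R : realFieldType) (r : nat) (lam : nat -> R) :
  (1 <= r)%N ->
  (forall j : nat, (1 <= j <= r)%N -> 0 <= lam j /\ lam j < cc R r j) ->
  let F := Fpoly R r in
  let H := Hpoly R r lam in
  let G := F - H + F * H in
  Nmon G = (Nmon F + Nmon (F * H))%N.
Proof.
move=> _ lam_bounds F H G.
have suppF : perm_eq (msupp F) (Fmons r).
  rewrite /F Fpoly_Fwith; apply: msupp_Fwith => j /lam_bounds [lam_ge0 lam_lt].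
  by rewrite gt_eqF // (le_lt_trans lam_ge0 lam_lt).
have suppFH : perm_eq (msupp (F - H)) (Fmons r).
  rewrite /F /H FpolyB_Hpoly; apply: msupp_Fwith => j /lam_bounds [_ lam_lt].
  by rewrite gt_eqF // subr_gt0.
rewrite /Nmon /G (@size_msuppD_mdeg_sep _ _ _ _ (2 * r + 1)).
- by rewrite (perm_size suppF) (perm_size suppFH).
- by move=> m; rewrite (perm_mem suppFH) => /mdeg_Fmons /andP [].
suff deg_FH : {in msupp (F * H), forall m, r.+1 + r.+1 <= mdeg m}%N.
  by move=> m /deg_FH; lia.
apply: mdeg_msuppM_ge => m; [rewrite (perm_mem suppF) | move/msupp_Hpoly];
  by case/mdeg_Fmons/andP.
Qed.
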